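(* Let $S$ be a monoid with zero and let $A_S$ be a semi-simple right $S$-act. The following are equivalent: (i) $A_S$ is Rees artinian; (ii) $A_S$ is finitely Rees cogenerated; (iii) $A_S$ is finitely generated; (iv) $A_S$ is Rees noetherian.
   Context: An $S$-act is $\theta$-simple if its only subacts are itself and a one-element subact. Over a monoid with zero, an $S$-act is semi-simple if it is a coproduct in the category $S$-Act$_0$ (acts with a distinguished zero; coproduct = union of the acts glued along their common zero) of $\theta$-simple acts; equivalently, each of its subacts is a $0$-direct summand. For a subact $B$, $\rho_B=(B\times B)\cup\Delta_A$. $A_S$ is finitely Rees cogenerated if whenever $\bigcap_{i\in I}\rho_{B_i}=\Delta_A$ for subacts $B_i$, already $\bigcap_{j\in J}\rho_{B_j}=\Delta_A$ for some finite $J\subseteq I$. Rees artinian (noetherian) means the descending (ascending) chain condition on subacts. *)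

From Stdlib Require Import List.
Import ListNotations.

Record monoid0 := Monoid0 {
  mcar :> Type;
  mmul : mcar -> mcar -> mcar;
  mone : mcar;
  mzero : mcar;
  mmulA : forall x y z, mmul x (mmul y z) = mmul (mmul x y) z;
  mmul1l : forall x, mmul mone x = x;
  mmulr1 : forall x, mmul x mone = x;
  mmul0l : forall x, mmul mzero x = mzero;
  mmulr0 : forall x, mmul x mzero = mzero
}.

Record ract0 (S : monoid0) := Ract0 {
  acar :> Type;
  act : acar -> S -> acar;
  atheta : acar;
  act1 : forall a, act a (mone S) = a;
  actA : forall a s t, act (act a s) t = act a (mmul S s t);
  act_theta : forall s, act atheta s = atheta
}.
Arguments act {S} _ _ _.
Arguments atheta {S} _.

Section Acts.
Variables (S : monoid0) (A : ract0 S).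

Definition subact (B : A -> Prop) : Prop :=
  (exists b, B b) /\ forall a s, B a -> B (act A a s).

Definition one_element (B : A -> Prop) : Prop :=
  exists b, forall x, B x <-> x = b.

Definition theta_simple (C : A -> Prop) : Prop :=
  subact C /\
  forall B, subact B -> (forall x, B x -> C x) ->
    (forall x, B x <-> C x) \/ one_element B.

(* A is (internally) the coproduct in S-Act_0 of theta-simple subacts:
   union of theta-simple subacts glued along their common zero. *)
Definition semisimple : Prop :=
  exists (I : Type) (C : I -> A -> Prop),
    (forall i, theta_simple (C i)) /\
    (forall i, C i (atheta A)) /\
    (forall a, exists i, C i a) /\
    (forall i j a, i <> j -> C i a -> C j a -> a = atheta A).

Definition rho (B : A -> Prop) (x y : A) : Prop := (B x /\ B y) \/ x = y.

Definition finitely_Rees_cogenerated : Prop :=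
  forall (I : Type) (B : I -> A -> Prop),
    (forall i, subact (B i)) ->
    (forall x y, (forall i, rho (B i) x y) -> x = y) ->
    exists J : list I, forall x y, (forall j, In j J -> rho (B j) x y) -> x = y.

Definition finitely_generated : Prop :=
  exists X : list A, forall a, exists x s, In x X /\ a = act A x s.

Definition Rees_artinian : Prop :=
  forall B : nat -> A -> Prop,
    (forall n, subact (B n)) ->
    (forall n x, B (Datatypes.S n) x -> B n x) ->
    exists n, forall m, n <= m -> forall x, B m x <-> B n x.

Definition Rees_noetherian : Prop :=
  forall B : nat -> A -> Prop,
    (forall n, subact (B n)) ->
    (forall n x, B n x -> B (Datatypes.S n) x) ->
    exists n, forall m, n <= m -> forall x, B m x <-> B n x.
End Acts.

From Stdlib Require Import List Classical ClassicalEpsilon Lia PeanoNat.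
Import ListNotations.

(* Call two elements of an act [same_cyclic] when each one reaches the other
   under the action, i.e. they generate the same cyclic subact.  A subact
   contains both or neither, so in an act with only finitely many cyclic
   subacts ([finitely_many_cyclics]) every subact is determined by its trace
   on a finite list of representatives; the ACC, the DCC, finite Rees
   cogeneration and finite generation all follow.
   A theta-simple subact containing theta has at most two cyclic subacts
   (theta S and bS for any nonzero b), so a semisimple act whose decomposition
   has finitely many nonzero components has finitely many cyclic subacts.
   If instead infinitely many components are nonzero, we extract a sequence
   D_0, D_1, ... of pairwise independent nonzero components: the tails
   theta + D_n + D_(n+1) + ... violate the DCC and finite Rees cogeneration,
   the heads theta + D_0 + ... + D_(n-1) violate the ACC, and a finitely
   generated act meets only finitely many components.  Hence the four
   conditions are all true or all false. *)

Lemma ascending_props_stabilize (P : nat -> Prop) :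
  (forall n, P n -> P (S n)) -> exists N, forall m, N <= m -> (P m <-> P N).
Proof.
  intros Hup.
  destruct (classic (exists n, P n)) as [[n0 Hn0]|Hnone].
  - exists n0; intros m Hm; split; [intros _; exact Hn0|intros _].
    induction Hm; auto.
  - exists 0; intros m _; split; intro H; exfalso; apply Hnone; eauto.
Qed.

Lemma descending_props_stabilize (P : nat -> Prop) :
  (forall n, P (S n) -> P n) -> exists N, forall m, N <= m -> (P m <-> P N).
Proof.
  intros Hdown.
  destruct (classic (forall n, P n)) as [Hall|Hsome].
  - exists 0; intros m _; split; auto.
  - apply not_all_ex_not in Hsome as [n0 Hn0].
    exists n0; intros m Hm; split; intro H; [|contradiction].
    exfalso; apply Hn0; induction Hm; auto.
Qed.

Lemma stabilize_on_list {X : Type} (B : nat -> X -> Prop) (L : list X) :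
  (forall x, exists N, forall m, N <= m -> (B m x <-> B N x)) ->
  exists N, forall m, N <= m -> forall x, In x L -> (B m x <-> B N x).
Proof.
  intros Hpt. induction L as [|y L IH].
  - exists 0; intros m _ x [].
  - destruct IH as [N1 H1]. destruct (Hpt y) as [N2 H2].
    exists (Nat.max N1 N2); intros m Hm x [<-|Hx].
    + rewrite (H2 m), (H2 (Nat.max N1 N2)) by lia. reflexivity.
    + rewrite (H1 m), (H1 (Nat.max N1 N2)) by (auto; lia). reflexivity.
Qed.

Lemma finitely_many_traces {X : Type} (L : list X) :
  forall (I : Type) (P : I -> X -> Prop),
  exists J : list I, forall i, exists j, In j J /\
    forall x, In x L -> (P i x <-> P j x).
Proof.
  induction L as [|x L IH]; intros I P.
  - destruct (classic (inhabited I)) as [[i0]|Hempty].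
    + exists [i0]; intro i; exists i0; split; [left; reflexivity|intros x []].
    + exists []; intro i; exfalso; exact (Hempty (inhabits i)).
  - (* split the family according to whether [P i x] holds *)
    destruct (IH {i | P i x} (fun i => P (proj1_sig i))) as [Jin Hin].
    destruct (IH {i | ~ P i x} (fun i => P (proj1_sig i))) as [Jout Hout].
    exists (map (@proj1_sig _ _) Jin ++ map (@proj1_sig _ _) Jout); intro i.
    destruct (classic (P i x)) as [Hx|Hx].
    + destruct (Hin (exist _ i Hx)) as [[j Hj] [HjJ Hagree]].
      exists j; split.
      * apply in_or_app; left; exact (in_map _ _ _ HjJ).
      * intros y [<-|Hy]; [tauto|exact (Hagree y Hy)].
    + destruct (Hout (exist _ i Hx)) as [[j Hj] [HjJ Hagree]].
      exists j; split.
      * apply in_or_app; right; exact (in_map _ _ _ HjJ).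
      * intros y [<-|Hy]; [split; intro H; contradiction|exact (Hagree y Hy)].
Qed.

Fixpoint picks {I : Type} (f : list I -> I) (n : nat) : list I :=
  match n with
  | 0 => []
  | Datatypes.S n => f (picks f n) :: picks f n
  end.

Lemma picks_contains {I : Type} (f : list I -> I) (k n : nat) :
  k < n -> In (f (picks f k)) (picks f n).
Proof.
  induction n as [|n IH]; intros Hk; [lia|simpl].
  destruct (Nat.eq_dec k n) as [->|Hne];
    [left; reflexivity|right; apply IH; lia].
Qed.

Lemma injective_sequence {I : Type} (P : I -> Prop) :
  (forall L : list I, exists i, ~ In i L /\ P i) ->
  exists g : nat -> I, (forall m n, g m = g n -> m = n) /\ forall n, P (g n).
Proof.
  intros Hfresh. destruct (choice _ Hfresh) as [f Hf].
  exists (fun n => f (picks f n)); split; [|intro n; apply Hf].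
  assert (Hlt : forall k n, k < n -> f (picks f k) <> f (picks f n)).
  { intros k n Hkn E. apply (proj1 (Hf (picks f n))).
    rewrite <- E; apply picks_contains, Hkn. }
  intros m n E. destruct (Nat.lt_total m n) as [Hmn|[Hmn|Hmn]]; auto.
  - exfalso; exact (Hlt m n Hmn E).
  - exfalso; exact (Hlt n m Hmn (eq_sym E)).
Qed.

Section CyclicSubacts.
Variables (S : monoid0) (A : ract0 S).

Definition reaches (a b : A) : Prop := exists s, b = act A a s.

Definition same_cyclic (a b : A) : Prop := reaches a b /\ reaches b a.

Definition finitely_many_cyclics : Prop :=
  exists X : list A, forall a, exists x, In x X /\ same_cyclic x a.

Lemma reaches_refl (a : A) : reaches a a.
Proof. exists (mone S); symmetry; apply act1. Qed.

Lemma same_cyclic_refl (a : A) : same_cyclic a a.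
Proof. split; apply reaches_refl. Qed.

Lemma subact_reaches (B : A -> Prop) (a b : A) :
  subact S A B -> B a -> reaches a b -> B b.
Proof. intros [_ Hcl] Ha [s ->]; apply Hcl, Ha. Qed.

Lemma subact_same_cyclic (B : A -> Prop) (x a : A) :
  subact S A B -> same_cyclic x a -> (B x <-> B a).
Proof.
  intros HB [Hxa Hax]; split; intro H; eapply subact_reaches; eauto.
Qed.

Section Representatives.
Variable X : list A.
Hypothesis X_reps : forall a, exists x, In x X /\ same_cyclic x a.

Lemma subact_determined_by_reps (B B' : A -> Prop) :
  subact S A B -> subact S A B' ->
  (forall x, In x X -> (B x <-> B' x)) -> forall a, B a <-> B' a.
Proof.
  intros HB HB' Hagree a. destruct (X_reps a) as [x [Hx Hxa]].
  rewrite <- (subact_same_cyclic B x a HB Hxa),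
          <- (subact_same_cyclic B' x a HB' Hxa).
  exact (Hagree x Hx).
Qed.

Lemma chain_stabilizes (B : nat -> A -> Prop) :
  (forall n, subact S A (B n)) ->
  (forall a, exists N, forall m, N <= m -> (B m a <-> B N a)) ->
  exists N, forall m, N <= m -> forall a, B m a <-> B N a.
Proof.
  intros HB Hpt. destruct (stabilize_on_list B X Hpt) as [N HN].
  exists N; intros m Hm.
  apply subact_determined_by_reps; auto.
Qed.

Lemma reps_artinian : Rees_artinian S A.
Proof.
  intros B HB Hdown. apply chain_stabilizes; auto.
  intro a; apply descending_props_stabilize; auto.
Qed.

Lemma reps_noetherian : Rees_noetherian S A.
Proof.
  intros B HB Hup. apply chain_stabilizes; auto.
  intro a; apply ascending_props_stabilize; auto.
Qed.

Lemma reps_finitely_generated : finitely_generated S A.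
Proof.
  exists X; intro a. destruct (X_reps a) as [x [Hx [[s Hs] _]]]. eauto.
Qed.

(* Finitely many traces on [X] means finitely many Rees congruences. *)
Lemma reps_finitely_Rees_cogenerated : finitely_Rees_cogenerated S A.
Proof.
  intros I B HB Htrivial.
  destruct (finitely_many_traces X I B) as [J HJ]. exists J.
  intros a b Hab. apply Htrivial; intro i.
  destruct (HJ i) as [j [Hj Hagree]].
  destruct (Hab j Hj) as [[Ha Hb]|E]; [left|right; exact E].
  pose proof (subact_determined_by_reps _ _ (HB i) (HB j) Hagree) as Hij.
  split; apply Hij; assumption.
Qed.

End Representatives.

Lemma theta_simple_moved_generates (C : A -> Prop) (a b : A) (s0 : S) :
  theta_simple S A C -> C a -> act A a s0 <> a -> C b -> reaches a b.
Proof.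
  intros [[_ Ccl] Hsimple] Ca Hmoved Cb.
  destruct (Hsimple (reaches a)) as [Hall|[c Hc]].
  - split; [exists a; apply reaches_refl|].
    intros x t [s ->]. exists (mmul S s t); apply actA.
  - intros x [s ->]; apply Ccl, Ca.
  - apply Hall, Cb.
  - exfalso; apply Hmoved.
    transitivity c; [apply Hc; exists s0; reflexivity|].
    symmetry; apply Hc, reaches_refl.
Qed.

Lemma theta_simple_fixed_point (C : A -> Prop) (b x : A) :
  theta_simple S A C -> C (atheta A) -> C b -> b <> atheta A ->
  (forall s, act A b s = b) -> C x -> x = atheta A \/ x = b.
Proof.
  intros [_ Hsimple] Cth Cb Hb Hfix Cx.
  destruct (Hsimple (fun y => y = atheta A \/ y = b)) as [Hall|[c Hc]].
  - split; [exists b; right; reflexivity|].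
    intros y t [->| ->]; [left; apply act_theta|right; apply Hfix].
  - intros y [->| ->]; assumption.
  - apply Hall, Cx.
  - exfalso; apply Hb.
    transitivity c; [apply Hc; right|symmetry; apply Hc; left]; reflexivity.
Qed.

Lemma theta_simple_nonzero_reaches (C : A -> Prop) (a b : A) :
  theta_simple S A C -> C (atheta A) -> C a -> C b ->
  a <> atheta A -> b <> atheta A -> reaches a b.
Proof.
  intros HC Cth Ca Cb Ha Hb.
  destruct (classic (exists s, act A a s <> a)) as [[s0 Hs0]|Hfixed].
  - exact (theta_simple_moved_generates C a b s0 HC Ca Hs0 Cb).
  - assert (Hfix : forall s, act A a s = a).
    { intro s; apply NNPP; intro H; apply Hfixed; exists s; exact H. }
    destruct (theta_simple_fixed_point C a b HC Cth Ca Ha Hfix Cb) as [E|E].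
    + contradiction.
    + rewrite E; apply reaches_refl.
Qed.

Lemma theta_simple_reps (C : A -> Prop) :
  theta_simple S A C -> C (atheta A) ->
  exists X : list A, forall a, C a -> exists x, In x X /\ same_cyclic x a.
Proof.
  intros HC Cth.
  destruct (classic (exists b, C b /\ b <> atheta A)) as [[b [Cb Hb]]|Hzero].
  - exists [atheta A; b]; intros a Ca.
    destruct (classic (a = atheta A)) as [->|Ha].
    + exists (atheta A); split; [left; reflexivity|apply same_cyclic_refl].
    + exists b; split; [right; left; reflexivity|].
      split; apply theta_simple_nonzero_reaches with C; assumption.
  - exists [atheta A]; intros a Ca.
    assert (E : a = atheta A) by (apply NNPP; intro Ha; apply Hzero; eauto).
    subst a; exists (atheta A).
    split; [left; reflexivity|apply same_cyclic_refl].
Qed.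

End CyclicSubacts.

Section Decomposition.
Variables (S : monoid0) (A : ract0 S) (I : Type) (C : I -> A -> Prop).
Hypothesis C_simple : forall i, theta_simple S A (C i).
Hypothesis C_theta : forall i, C i (atheta A).
Hypothesis C_cover : forall a, exists i, C i a.

Definition finitely_many_components : Prop :=
  exists L : list I, forall a, a = atheta A \/ exists i, In i L /\ C i a.

Lemma components_reps (L : list I) :
  exists X : list A, forall a, (a = atheta A \/ exists i, In i L /\ C i a) ->
    exists x, In x X /\ same_cyclic S A x a.
Proof.
  induction L as [|i L IH].
  - exists [atheta A]; intros a [->|[i [[] _]]].
    exists (atheta A); split; [left; reflexivity|apply same_cyclic_refl].
  - destruct IH as [XL HXL].
    destruct (theta_simple_reps S A (C i) (C_simple i) (C_theta i)) as [Xi HXi].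
    exists (Xi ++ XL); intros a [E|[j [[<-|Hj] Cj]]].
    + destruct (HXL a (or_introl E)) as [x [Hx Hxa]].
      exists x; split; [apply in_or_app; right; exact Hx|exact Hxa].
    + destruct (HXi a Cj) as [x [Hx Hxa]].
      exists x; split; [apply in_or_app; left; exact Hx|exact Hxa].
    + destruct (HXL a (or_intror (ex_intro _ j (conj Hj Cj)))) as [x [Hx Hxa]].
      exists x; split; [apply in_or_app; right; exact Hx|exact Hxa].
Qed.

Lemma finitely_many_components_cyclics :
  finitely_many_components -> finitely_many_cyclics S A.
Proof.
  intros [L HL]. destruct (components_reps L) as [X HX].
  exists X; intro a; apply HX, HL.
Qed.

Lemma components_of_list (X : list A) :
  exists L : list I, forall x, In x X -> exists i, In i L /\ C i x.
Proof.
  induction X as [|x X [L HL]].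
  - exists []; intros x [].
  - destruct (C_cover x) as [i Ci]. exists (i :: L).
    intros y [<-|Hy]; [exists i; split; [left; reflexivity|exact Ci]|].
    destruct (HL y Hy) as [j [Hj Cj]]; exists j; split; [right|]; assumption.
Qed.

(* A finitely generated act has finitely many nonzero components, since
   components are closed under the action. *)
Lemma finitely_generated_components :
  finitely_generated S A -> finitely_many_components.
Proof.
  intros [X HX]. destruct (components_of_list X) as [L HL].
  exists L; intro a; right.
  destruct (HX a) as [x [s [Hx ->]]]. destruct (HL x Hx) as [i [Hi Ci]].
  exists i; split; [exact Hi|].
  destruct (C_simple i) as [[_ Ccl] _]; apply Ccl, Ci.
Qed.

Lemma infinitely_many_components_sequence :
  ~ finitely_many_components ->
  exists g : nat -> I, (forall m n, g m = g n -> m = n) /\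
    forall n, exists a, a <> atheta A /\ C (g n) a.
Proof.
  intros Hinf.
  apply (injective_sequence (fun i => exists a, a <> atheta A /\ C i a)).
  intro L.
  apply NNPP; intro Hno; apply Hinf; exists L; intro a.
  destruct (classic (a = atheta A)) as [E|Ha]; [left; exact E|right].
  destruct (C_cover a) as [i Ci]; exists i; split; [|exact Ci].
  apply NNPP; intro Hi; apply Hno; exists i; split; [exact Hi|exists a; auto].
Qed.

End Decomposition.

Section IndependentSequence.
Variables (S : monoid0) (A : ract0 S) (D : nat -> A -> Prop).
Hypothesis D_closed : forall n a s, D n a -> D n (act A a s).
Hypothesis D_independent :
  forall k n a, k <> n -> D k a -> D n a -> a = atheta A.
Hypothesis D_nonzero : forall n, exists a, a <> atheta A /\ D n a.

Definition tail (n : nat) (a : A) : Prop :=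
  a = atheta A \/ exists k, n <= k /\ D k a.

Definition head (n : nat) (a : A) : Prop :=
  a = atheta A \/ exists k, k < n /\ D k a.

Lemma tail_subact (n : nat) : subact S A (tail n).
Proof.
  split; [exists (atheta A); left; reflexivity|].
  intros a s [->|[k [Hk Dk]]]; [left; apply act_theta|right; eauto].
Qed.

Lemma head_subact (n : nat) : subact S A (head n).
Proof.
  split; [exists (atheta A); left; reflexivity|].
  intros a s [->|[k [Hk Dk]]]; [left; apply act_theta|right; eauto].
Qed.

Lemma nonzero_component_unique (k n : nat) (a : A) :
  a <> atheta A -> D n a -> D k a -> k = n.
Proof.
  intros Ha Dn Dk. destruct (Nat.eq_dec k n) as [E|Hkn]; [exact E|].
  exfalso; exact (Ha (D_independent k n a Hkn Dk Dn)).
Qed.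

Lemma tails_not_artinian : ~ Rees_artinian S A.
Proof.
  intros Hart. destruct (Hart tail tail_subact) as [N HN].
  { intros n a [E|[k [Hk Dk]]]; [left; exact E|].
    right; exists k; split; [lia|exact Dk]. }
  destruct (D_nonzero N) as [a [Ha Da]].
  assert (Hnext : tail (Datatypes.S N) a).
  { apply (HN (Datatypes.S N) (Nat.le_succ_diag_r N)).
    right; exists N; split; [reflexivity|exact Da]. }
  destruct Hnext as [E|[k [Hk Dk]]]; [exact (Ha E)|].
  pose proof (nonzero_component_unique k N a Ha Da Dk); lia.
Qed.

Lemma heads_not_noetherian : ~ Rees_noetherian S A.
Proof.
  intros Hnoeth. destruct (Hnoeth head head_subact) as [N HN].
  { intros n a [E|[k [Hk Dk]]]; [left; exact E|].
    right; exists k; split; [lia|exact Dk]. }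
  destruct (D_nonzero N) as [a [Ha Da]].
  assert (Hprev : head N a).
  { apply (HN (Datatypes.S N) (Nat.le_succ_diag_r N)).
    right; exists N; split; [apply Nat.lt_succ_diag_r|exact Da]. }
  destruct Hprev as [E|[k [Hk Dk]]]; [exact (Ha E)|].
  pose proof (nonzero_component_unique k N a Ha Da Dk); lia.
Qed.

(* Only theta lies in every tail, so the Rees congruences of the tails
   intersect to the diagonal. *)
Lemma tails_meet_in_theta (a : A) : (forall n, tail n a) -> a = atheta A.
Proof.
  intros Hall. destruct (Hall 0) as [E|[k [_ Dk]]]; [exact E|].
  destruct (Hall (Datatypes.S k)) as [E|[k' [Hk' Dk']]]; [exact E|].
  apply (D_independent k k' a); [lia|assumption|assumption].
Qed.

Lemma tails_not_finitely_Rees_cogenerated : ~ finitely_Rees_cogenerated S A.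
Proof.
  intros Hfrc. destruct (Hfrc nat tail tail_subact) as [J HJ].
  { intros a b Hab. apply NNPP; intro Hne.
    assert (Ha : forall n, tail n a) by (intro n; destruct (Hab n); tauto).
    assert (Hb : forall n, tail n b) by (intro n; destruct (Hab n); tauto).
    apply Hne; rewrite (tails_meet_in_theta a Ha), (tails_meet_in_theta b Hb).
    reflexivity. }
  (* a nonzero element beyond every index in J is related to theta by each
     chosen congruence *)
  set (N := list_max J).
  destruct (D_nonzero N) as [a [Ha Da]].
  apply Ha, HJ; intros j Hj; left.
  split; [right; exists N; split|left; reflexivity].
  - exact (proj1 (Forall_forall _ J) (proj1 (list_max_le J N) (le_n N)) j Hj).
  - exact Da.
Qed.

End IndependentSequence.

Theorem mainTheorem8 (S : monoid0) (A : ract0 S) :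
  semisimple S A ->
  (Rees_artinian S A <-> finitely_Rees_cogenerated S A) /\
  (finitely_Rees_cogenerated S A <-> finitely_generated S A) /\
  (finitely_generated S A <-> Rees_noetherian S A).
Proof.
  intros [I [C [Hsimple [Htheta [Hcover Hdisjoint]]]]].
  destruct (classic (finitely_many_components S A I C)) as [Hfin|Hinf].
  -
    destruct (finitely_many_components_cyclics S A I C Hsimple Htheta Hfin)
      as [X HX].
    pose proof (reps_artinian S A X HX).
    pose proof (reps_noetherian S A X HX).
    pose proof (reps_finitely_generated S A X HX).
    pose proof (reps_finitely_Rees_cogenerated S A X HX).
    tauto.
  -
    destruct (infinitely_many_components_sequence S A I C Hcover Hinf)
      as [g [Hinj Hnonzero]].
    set (D := fun n => C (g n)).
    assert (Hclosed : forall n a s, D n a -> D n (act A a s)).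
    { intros n a s Da; destruct (Hsimple (g n)) as [[_ Hcl] _]; apply Hcl, Da. }
    assert (Hindep : forall k n a, k <> n -> D k a -> D n a -> a = atheta A).
    { intros k n a Hkn; apply Hdisjoint; intro E; apply Hkn, Hinj, E. }
    pose proof (tails_not_artinian S A D Hclosed Hindep Hnonzero).
    pose proof (heads_not_noetherian S A D Hclosed Hindep Hnonzero).
    pose proof
      (tails_not_finitely_Rees_cogenerated S A D Hclosed Hindep Hnonzero).
    assert (~ finitely_generated S A).
    { intro Hfg; apply Hinf.
      exact (finitely_generated_components S A I C Hsimple Hcover Hfg). }
    tauto.
Qed.
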